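(* Let $f$ be smooth and bistable (there is $\alpha\in(0,1)$ with $f(0)=f(\alpha)=f(1)=0$, $f'(0),f'(1)<0<f'(\alpha)$, $f>0$ on $(-\infty,0)\cup(\alpha,1)$, $f<0$ on $(0,\alpha)\cup(1,\infty)$), $\tau_m=1/\sup_{[0,1]}|f'|$, $\delta_+=-f'(1)$, $\delta_-=-f'(0)$, $\chi_0=\tfrac12\min\{\delta_+,\delta_-\}$, and $\Omega=\{\lambda\in\mathbb{C}:\mathrm{Re}\,\lambda>-\chi_0\}$. For $\tau\in(0,\tau_m)$ let $c=c_\ast(\tau)$ be the speed of the traveling wave of $u_t=v_x+f(u)$, $\tau v_t=u_x-v$ connecting $(0,0)$ to $(1,0)$, $b_\pm=1+\tau\delta_\pm$, and $$\mathbf{A}^\tau_\pm(\lambda)=(1-c^2\tau)^{-1}\begin{pmatrix}0&1-c^2\tau\\ \tau\lambda^2+\lambda b_\pm+\delta_\pm& -c(b_\pm+2\tau\lambda)\end{pmatrix}.$$ Then for all $\tau\in(0,\tau_m)$ and all $\lambda\in\Omega$, the matrices $\mathbf{A}^\tau_\pm(\lambda)$ have no eigenvalues on the imaginary axis (no center eigenspace), and their stable and unstable eigenspaces $\mathbb{S}^\tau_\pm(\lambda)$, $\mathbb{U}^\tau_\pm(\lambda)$ satisfy $\dim\mathbb{S}^\tau_\pm(\lambda)=\dim\mathbb{U}^\tau_\pm(\lambda)=1$.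
   Context: It is known that $c_\ast(\tau)^2\tau<1$. The matrices $\mathbf{A}^\tau_\pm(\lambda)$ are the limits as $x\to\pm\infty$ of the coefficient matrix of the first-order form of the linearized eigenvalue problem around the wave. *)

From HB Require Import structures.
From mathcomp Require Import all_boot all_order all_algebra.
From mathcomp Require Import all_classical all_reals all_analysis.
From mathcomp Require Import complex.
Set Implicit Arguments. Unset Strict Implicit. Unset Printing Implicit Defensive.
Import Order.TTheory GRing.Theory Num.Theory.
Import numFieldNormedType.Exports.
Local Open Scope classical_set_scope.
Local Open Scope complex_scope.
Local Open Scope ring_scope.

Section Defs.
Variable R : realType.

Definition smooth (f : R -> R) : Prop :=
  forall (n : nat) (x : R), derivable (derive1n n f) x 1.

Definition bistable (f : R -> R) (alpha : R) : Prop :=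
  [/\ 0 < alpha < 1,
      f 0 = 0 /\ f alpha = 0 /\ f 1 = 0,
      derive1 f 0 < 0 /\ derive1 f 1 < 0 /\ 0 < derive1 f alpha,
      (forall x, x < 0 -> 0 < f x) /\ (forall x, alpha < x < 1 -> 0 < f x)
    & (forall x, 0 < x < alpha -> f x < 0) /\ (forall x, 1 < x -> f x < 0)].

Definition tau_m (f : R -> R) : R :=
  (sup [set `|derive1 f x| | x in `[0, 1]])^-1.

Definition delta_plus (f : R -> R) : R := - derive1 f 1.
Definition delta_minus (f : R -> R) : R := - derive1 f 0.
Definition chi0 (f : R -> R) : R := (Num.min (delta_plus f) (delta_minus f)) / 2.

(* (u,v)(x,t) = (U,V)(x - c t) is a traveling wave of
   u_t = v_x + f(u), tau v_t = u_x - v, connecting (0,0) at x = -oo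
   to (1,0) at x = +oo. *)
Definition traveling_wave (f : R -> R) (tau c : R) : Prop :=
  exists U V : R -> R,
    [/\ forall x, derivable U x 1 /\ derivable V x 1,
        forall x, - c * derive1 U x = derive1 V x + f (U x),
        forall x, - (tau * c) * derive1 V x = derive1 U x - V x,
        U x @[x --> -oo] --> (0 : R) /\ V x @[x --> -oo] --> (0 : R)
      & U x @[x --> +oo] --> (1 : R) /\ V x @[x --> +oo] --> (0 : R)].

Definition Amat (tau c delta : R) (lam : R[i]) : 'M[R[i]]_2 :=
  let b := 1 + tau * delta in
  ((1 - c ^+ 2 * tau)^-1)%:C *:
  \matrix_(i < 2, j < 2)
    (if (i : nat) == 0%N then
       (if (j : nat) == 0%N then 0 else (1 - c ^+ 2 * tau)%:C)
     else
       (if (j : nat) == 0%N then tau%:C * lam ^+ 2 + lam * b%:C + delta%:C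
        else - c%:C * (b%:C + 2%:R * tau%:C * lam))).

End Defs.

Definition eigs (R : rcfType) (n : nat) (A : 'M[R[i]]_n) : seq R[i] :=
  sval (closed_field_poly_normal (char_poly A)).

(* Stable / unstable (generalized) eigenspaces of A acting on column vectors,
   represented (via transposition) as row spaces:
   sum over eigenvalues mu with Re mu < 0 (resp. > 0) of ker (A - mu)^n. *)
Definition stable_space (R : rcfType) (n : nat) (A : 'M[R[i]]_n) : 'M[R[i]]_n :=
  (\sum_(mu <- undup (eigs A) | (complex.Re mu < 0)%R) kermx ((A^T - mu%:M) ^+ n))%MS.
Definition unstable_space (R : rcfType) (n : nat) (A : 'M[R[i]]_n) : 'M[R[i]]_n :=
  (\sum_(mu <- undup (eigs A) | (0 < complex.Re mu)%R) kermx ((A^T - mu%:M) ^+ n))%MS.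

From HB Require Import structures.
From mathcomp Require Import all_boot all_order all_algebra.
From mathcomp Require Import all_classical all_reals all_analysis.
From mathcomp Require Import ring lra complex.
Import Order.TTheory GRing.Theory Num.Theory.
Local Open Scope ring_scope.
Local Open Scope complex_scope.

(* Put z = 1 + tau delta + 2 tau lam and k = 1 - c^2 tau.  Rescaled by 2 tau k,
   the eigenvalues of A^tau(lam) are the roots of
   mu^2 + 2 tau c z mu - tau k (z^2 - (1 - tau delta)^2),
   i.e. mu = - tau c z +- w with w^2 = tau z^2 - tau k (1 - tau delta)^2.
   When Re lam > - delta / 2 and tau delta < 1 we have Re z > 1 > 1 - tau delta > 0,
   and then (Re w)^2 > (tau c Re z)^2, so the two eigenvalues have real parts of
   opposite signs. *)

(* [u + i v] is a square root of [(b^2 + h) (x + i y)^2 - h m]. *)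
Lemma sqr_Re_sqrt_gt (R : realFieldType) (b h m x y u v : R) :
  0 < h -> 0 <= m -> m < x ^+ 2 ->
  u ^+ 2 - v ^+ 2 = (b ^+ 2 + h) * (x ^+ 2 - y ^+ 2) - h * m ->
  u * v = (b ^+ 2 + h) * x * y ->
  b ^+ 2 * x ^+ 2 < u ^+ 2.
Proof.
move=> h0 m0 mx Ere Eim.
(* u^2 and -v^2 are the roots of s^2 - (u^2 - v^2) s - (u v)^2; evaluate at s = b^2 x^2. *)
have key : (u ^+ 2 - b ^+ 2 * x ^+ 2) * (b ^+ 2 * x ^+ 2 + v ^+ 2)
         = x ^+ 2 * h * (b ^+ 2 * (x ^+ 2 - m) + (b ^+ 2 + h) * y ^+ 2).
  transitivity (b ^+ 2 * x ^+ 2 * (u ^+ 2 - v ^+ 2) + (u * v) ^+ 2 - (b ^+ 2 * x ^+ 2) ^+ 2).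
    by ring.
  by rewrite Ere Eim; ring.
rewrite ltNge; apply/negP => le_u.
have [y0|y0] := eqVneq y 0.
  by move: Ere; rewrite y0; nra.
have : 0 < x ^+ 2 * h * (b ^+ 2 * (x ^+ 2 - m) + (b ^+ 2 + h) * y ^+ 2).
  apply: mulr_gt0; first by apply: mulr_gt0 => //; lra.
  have : 0 < y ^+ 2 by rewrite exprn_even_gt0.
  nra.
rewrite -key; nra.
Qed.

Lemma Re_roots_mul_lt0 (R : rcfType) (b h m : R) (z r1 r2 : R[i]) :
  0 < h -> 0 <= m -> m < complex.Re z ^+ 2 ->
  r1 + r2 = - (2 * b)%:C * z -> r1 * r2 = - h%:C * (z ^+ 2 - m%:C) ->
  complex.Re r1 * complex.Re r2 < 0.
Proof.
move=> h0 m0 mz sum prod.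
have r2E : r2 = - (2 * b)%:C * z - r1 by rewrite -sum addrC addKr.
have sqrtE : (r1 + b%:C * z) ^+ 2 = (b ^+ 2 + h)%:C * z ^+ 2 - (h * m)%:C.
  transitivity (b%:C ^+ 2 * z ^+ 2 - r1 * r2); first by rewrite r2E rmorphM rmorph_nat; ring.
  by rewrite prod rmorphD !rmorphM; ring.
move: sqrtE; rewrite r2E; clear sum prod r2E.
case: r1 => u v; case: z => x y /= in mz *; rewrite !expr2; simpc.
case=> Ere Eim.
have := @sqr_Re_sqrt_gt R b h m x y (u + b * x) (v + b * y) h0 m0 mz.
rewrite !expr2 => /(_ Ere) lt.
have {}lt : b * b * (x * x) < (u + b * x) * (u + b * x) by apply: lt; lra.
lra.
Qed.

Lemma mxtrace_mx22 (R : pzSemiRingType) (A : 'M[R]_2) : \tr A = A 0 0 + A 1 1.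
Proof. by rewrite /mxtrace big_ord_recl big_ord1; congr (_ + A _ _); apply/val_inj. Qed.

Lemma det_mx22 (R : comPzRingType) (A : 'M[R]_2) :
  \det A = A 0 0 * A 1 1 - A 0 1 * A 1 0.
Proof.
rewrite (expand_det_row _ 0) !big_ord_recl big_ord0 /cofactor !det_mx11 !mxE /=.
rewrite !expr0 !mul1r addr0 /bump /= expr1 mulN1r mulrN.
by congr (A _ _ * A _ _ - A _ _ * A _ _); apply/val_inj.
Qed.

Lemma char_poly_trmx (R : comNzRingType) n (A : 'M[R]_n) :
  char_poly A^T = char_poly A.
Proof.
by rewrite /char_poly -[in RHS]det_tr /char_poly_mx linearB /= tr_scalar_mx map_trmx.
Qed.

Lemma mx22_vieta {R : comNzRingType} {A : 'M[R]_2} {r1 r2 : R} :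
  char_poly A = ('X - r1%:P) * ('X - r2%:P) -> r1 + r2 = \tr A /\ r1 * r2 = \det A.
Proof.
have expand : ('X - r1%:P) * ('X - r2%:P) = 'X ^+ 2 - (r1 + r2) *: 'X + (r1 * r2)%:P.
  by rewrite polyCM -mul_polyC polyCD; ring.
move=> chA; split.
- apply: oppr_inj; rewrite -(@char_poly_trace _ _ A) // chA expand.
  by rewrite !coefE /=; ring.
- rewrite -[RHS]mul1r -[1](@expr1n _ 2) -sqrrN -(char_poly_det A) chA expand.
  by rewrite !coefE /=; ring.
Qed.

Lemma big_seq2_cond {R : Type} {idx : R} (op : Monoid.law idx) {I : Type}
    (a b : I) {P : pred I} (F : I -> R) :
  P a -> ~~ P b -> \big[op/idx]_(i <- [:: a; b] | P i) F i = F a.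
Proof. by move=> Pa Pb; rewrite !big_cons big_nil Pa (negbTE Pb) Monoid.mulm1. Qed.

Lemma big_seq2_cond_r {R : Type} {idx : R} (op : Monoid.law idx) {I : Type}
    (a b : I) {P : pred I} (F : I -> R) :
  ~~ P a -> P b -> \big[op/idx]_(i <- [:: a; b] | P i) F i = F b.
Proof. by move=> Pa Pb; rewrite !big_cons big_nil (negbTE Pa) Pb Monoid.mulm1. Qed.

Lemma char_poly_eigs {R : rcfType} {n} (A : 'M[R[i]]_n) :
  char_poly A = \prod_(z <- eigs A) ('X - z%:P).
Proof.
rewrite /eigs; case: closed_field_poly_normal => r /= ->.
by rewrite (monicP (char_poly_monic A)) scale1r.
Qed.

Lemma size_eigs {R : rcfType} {n} (A : 'M[R[i]]_n) : size (eigs A) = n.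
Proof.
by apply: succn_inj; rewrite -(size_prod_XsubC _ id) -char_poly_eigs size_char_poly.
Qed.

Lemma mxrank_ker_sqr_simple {F : fieldType} {A : 'M[F]_2} {r r' : F} :
  char_poly A = ('X - r%:P) * ('X - r'%:P) -> r != r' ->
  \rank (kermx ((A - r%:M) ^+ 2)) = 1%N.
Proof.
move=> chA neq; set N := A - r%:M.
have CH : N * (A - r'%:M) = 0.
  by have := Cayley_Hamilton A; rewrite chA rmorphM !rmorphB /= horner_mx_X !horner_mx_C.
have N2 : N ^+ 2 = (r' - r) *: N.
  have NE : N = (A - r'%:M) + (r' - r)%:M.
    by rewrite raddfB /= addrA subrK.
  by rewrite expr2 {2}NE mulrDr CH add0r -mulmxE mul_mx_scalar.
have N_neq0 : N != 0.
  apply: contraNneq neq => /eqP; rewrite subr_eq0 => /eqP Ar.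
  have [tr _] := mx22_vieta chA.
  by move: tr; rewrite Ar mxtrace_scalar mulr2n => /addrI ->.
have kerN : (0 < \rank (kermx N))%N.
  rewrite lt0n mxrank_eq0 -/(eigenspace A r) -/(eigenvalue A r).
  by rewrite eigenvalue_root_char chA rootM root_XsubC eqxx.
rewrite mxrank_ker N2 (eqmx_scale _ _); last by rewrite subr_eq0 eq_sym.
move: kerN N_neq0; rewrite -mxrank_eq0 mxrank_ker.
by case: (\rank N) (rank_leq_row N) => [|[|[|]]].
Qed.

Lemma mx22_hyperbolic {R : rcfType} (A : 'M[R[i]]_2) :
  (forall r1 r2 : R[i], r1 + r2 = \tr A -> r1 * r2 = \det A ->
     complex.Re r1 * complex.Re r2 < 0) ->
  [/\ forall mu : R[i], eigenvalue A^T mu -> complex.Re mu != 0,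
      \rank (stable_space A) = 1%N & \rank (unstable_space A) = 1%N].
Proof.
move=> opposite.
have [r1 [r2 eigsA]] : exists r1 r2, eigs A = [:: r1; r2].
  by move: (size_eigs A); case: (eigs A) => [|r1 [|r2 []]] // _; exists r1, r2.
have chA : char_poly A^T = ('X - r1%:P) * ('X - r2%:P).
  by rewrite char_poly_trmx char_poly_eigs eigsA big_cons big_seq1.
have chA' : char_poly A^T = ('X - r2%:P) * ('X - r1%:P) by rewrite mulrC.
have [tr det] := mx22_vieta chA; rewrite mxtrace_tr det_tr in tr det.
have Re12 := opposite r1 r2 tr det.
have neq : r1 != r2 by apply: contraTneq Re12 => ->; rewrite -leNgt; nra.
have noimag : forall mu : R[i], eigenvalue A^T mu -> complex.Re mu != 0.
  move=> mu; rewrite eigenvalue_root_char chA rootM !root_XsubC.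
  by case/orP => /eqP ->; apply: contraTneq Re12 => ->; rewrite ?mul0r ?mulr0 ltxx.
have ker1 := mxrank_ker_sqr_simple chA neq.
have ker2 : \rank (kermx ((A^T - r2%:M) ^+ 2)) = 1%N.
  by apply: mxrank_ker_sqr_simple chA' _; rewrite eq_sym.
have undupE : undup [:: r1; r2] = [:: r1; r2] by rewrite /= inE (negbTE neq).
rewrite /stable_space /unstable_space eigsA undupE.
have [Re1|Re1] := boolP (complex.Re r1 < 0).
- have Re2 : 0 < complex.Re r2 by nra.
  split; first exact: noimag.
  + have nRe2 : ~~ (complex.Re r2 < 0) by rewrite -leNgt ltW.
    by rewrite (big_seq2_cond _ r1 r2 _ Re1 nRe2); exact: ker1.
  + by rewrite (big_seq2_cond_r _ r1 r2 _ (negbT (lt_gtF Re1)) Re2); exact: ker2.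
- have Re1' : 0 < complex.Re r1.
    by rewrite lt_def leNgt Re1 andbT; apply: contraTneq Re12 => ->; rewrite mul0r ltxx.
  have Re2 : complex.Re r2 < 0 by nra.
  split; first exact: noimag.
  + by rewrite (big_seq2_cond_r _ r1 r2 _ Re1 Re2); exact: ker2.
  + have nRe2 : ~~ (0 < complex.Re r2) by rewrite -leNgt ltW.
    by rewrite (big_seq2_cond _ r1 r2 _ Re1' nRe2); exact: ker1.
Qed.

Lemma Amat_tr_det {R : realType} (tau c delta : R) (lam : R[i]) :
  let k := 1 - c ^+ 2 * tau in
  let z := (1 + tau * delta)%:C + 2%:R * tau%:C * lam in
  k != 0 ->
  \tr (Amat tau c delta lam) = - (c%:C * z) / k%:C /\
  \det (Amat tau c delta lam) =
    - (tau%:C * lam ^+ 2 + lam * (1 + tau * delta)%:C + delta%:C) / k%:C.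
Proof.
move=> k z k0; have kC : k%:C != 0 by rewrite fmorph_eq0.
rewrite /Amat mxtraceZ detZ mxtrace_mx22 det_mx22 !mxE /= -/k -/z fmorphV.
by split; field.
Qed.

Lemma Amat_Re_roots_mul_lt0 (R : realType) (tau c delta : R) (lam r1 r2 : R[i]) :
  0 < tau -> 0 < delta -> tau * delta < 1 -> c ^+ 2 * tau < 1 ->
  - (delta / 2) < complex.Re lam ->
  r1 + r2 = \tr (Amat tau c delta lam) -> r1 * r2 = \det (Amat tau c delta lam) ->
  complex.Re r1 * complex.Re r2 < 0.
Proof.
move=> tau0 delta0 taudelta ctau lam_gt; set k := 1 - c ^+ 2 * tau.
set z := (1 + tau * delta)%:C + 2%:R * tau%:C * lam.
have k0 : 0 < k by rewrite subr_gt0.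
have kC : k%:C != 0 by rewrite fmorph_eq0 lt0r_neq0.
have [-> ->] := Amat_tr_det tau c delta lam (lt0r_neq0 k0).
rewrite -/k -/z => sum prod; clearbody k.
have Rez : complex.Re z = 1 + tau * delta + 2 * tau * complex.Re lam.
  by rewrite /z; case: lam {lam_gt sum prod z} => ? ?; simpc.
have ReZ (a : R) (w : R[i]) : complex.Re (a%:C * w) = a * complex.Re w.
  by case: w => ? ?; simpc.
set s := 2 * tau * k.
have s0 : 0 < s by rewrite !mulr_gt0.
suff : complex.Re (s%:C * r1) * complex.Re (s%:C * r2) < 0.
  by rewrite !ReZ mulrACA pmulr_rlt0 // mulr_gt0.
apply: (@Re_roots_mul_lt0 R (tau * c) (tau * k) ((1 - tau * delta) ^+ 2) z).
- exact: mulr_gt0.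
- exact: sqr_ge0.
- have : tau * (- (delta / 2)) < tau * complex.Re lam by rewrite ltr_pM2l.
  have := mulr_gt0 tau0 delta0; rewrite Rez; nra.
- rewrite -mulrDr sum /s !rmorphM /=; field; exact: kC.
- rewrite mulrACA prod /z /s !rmorphM !rmorphB !rmorphD !rmorphM rmorph1 /=.
  by field.
Qed.

Lemma lt_tau_m_mul_norm_derive (R : realType) (f : R -> R) (tau x : R) :
  0 < tau < tau_m f -> 0 <= x <= 1 -> tau * `|derive1 f x| < 1.
Proof.
move=> /andP[tau0 tau_lt] x01.
set S := [set `|derive1 f y| | y in `[0, 1]]%classic.
have Sx : S `|derive1 f x| by exists x; rewrite //= in_itv.
have [supS|nsupS] := pselect (has_sup S); last first.
  by move: tau_lt; rewrite /tau_m -/S sup_out // invr0; lra.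
have le_sup := sup_upper_bound supS Sx.
have sup_gt0 : 0 < sup S.
  rewrite lt_def (le_trans _ le_sup) // andbT; apply: contraTneq tau_lt => S0.
  by rewrite /tau_m -/S S0 invr0 -leNgt ltW.
move: tau_lt; rewrite /tau_m -/S -(ltr_pM2r sup_gt0) mulVf ?lt0r_neq0 // => lt1.
by apply: le_lt_trans lt1; rewrite ler_wpM2l // ltW.
Qed.

Lemma Amat_hyperbolic {R : realType} (tau c delta : R) (lam : R[i]) :
  0 < tau -> 0 < delta -> tau * delta < 1 -> c ^+ 2 * tau < 1 ->
  - (delta / 2) < complex.Re lam ->
  let A := Amat tau c delta lam in
  [/\ forall mu : R[i], eigenvalue A^T mu -> complex.Re mu != 0,
      \rank (stable_space A) = 1%N & \rank (unstable_space A) = 1%N].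
Proof.
move=> tau0 delta0 taudelta ctau lam_gt A; apply: mx22_hyperbolic => r1 r2.
exact: Amat_Re_roots_mul_lt0.
Qed.

Theorem lemma3p13 (R : realType) (f : R -> R) (alpha : R) :
  smooth f -> bistable f alpha ->
  forall tau c : R, 0 < tau < tau_m f ->
  traveling_wave f tau c -> c ^+ 2 * tau < 1 ->
  forall lam : R[i], - chi0 f < complex.Re lam ->
  let Ap := Amat tau c (delta_plus f) lam in
  let Am := Amat tau c (delta_minus f) lam in
  [/\ forall mu : R[i], eigenvalue Ap^T mu -> complex.Re mu != 0,
      forall mu : R[i], eigenvalue Am^T mu -> complex.Re mu != 0,
      \rank (stable_space Ap) = 1%N /\ \rank (unstable_space Ap) = 1%N
    & \rank (stable_space Am) = 1%N /\ \rank (unstable_space Am) = 1%N].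
Proof.
move=> _ [_ _ [f'0 [f'1 _]] _ _] tau c tau_range _ ctau lam lam_gt Ap Am.
have tau0 : 0 < tau by case/andP: tau_range.
have hyperbolic_at x : 0 <= x <= 1 -> derive1 f x < 0 -> chi0 f <= - derive1 f x / 2 ->
    let A := Amat tau c (- derive1 f x) lam in
    [/\ forall mu : R[i], eigenvalue A^T mu -> complex.Re mu != 0,
        \rank (stable_space A) = 1%N & \rank (unstable_space A) = 1%N].
  move=> x01 f'x chi_le; apply: Amat_hyperbolic => //.
  - by rewrite oppr_gt0.
  - by rewrite -(ltr0_norm f'x); exact: lt_tau_m_mul_norm_derive.
  - by apply: le_lt_trans lam_gt; rewrite lerN2.
have [||imP stP unP] := hyperbolic_at 1 _ f'1.
- by rewrite ler01 lexx.
- by rewrite /chi0 ler_pM2r // ge_min lexx.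
have [||imM stM unM] := hyperbolic_at 0 _ f'0.
- by rewrite lexx ler01.
- by rewrite /chi0 ler_pM2r // ge_min lexx orbT.
split; [exact: imP | exact: imM | exact: conj stP unP | exact: conj stM unM].
Qed.
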